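(* $\mathfrak{L}(\mathrm{rtDVA}(1))\subsetneq\mathfrak{L}(\mathrm{1DFAM})$.
   Context: $\mathfrak{L}(A)$ denotes the class of languages recognized by machines of type $A$. A real-time deterministic vector automaton of dimension $1$ ($\mathrm{rtDVA}(1)$) is a 6-tuple $(Q,\Sigma,\delta,q_0,Q_a,v)$ with finite state set $Q$, initial state $q_0$, accept states $Q_a$, initial value $v\in\mathbb{Q}$ (freely chosen), and $\delta:Q\times(\Sigma\cup\{\cent,\$\})\times\{=,\neq\}\to Q\times\mathbb{Q}$. The input $w$ is read as $\cent w\$$ left to right, one symbol per step; in state $q$ reading $\sigma$, with $\omega$ equal to ''$=$'' iff the current value equals $1$, if $\delta(q,\sigma,\omega)=(q',m)$ the machine goes to $q'$ and multiplies its value by $m$. Acceptance: after processing $\$$, the state is in $Q_a$ and the value equals $1$. A one-way deterministic finite automaton with multiplication (1DFAM) is a 6-tuple $(Q,\Sigma,\delta,q_0,Q_a,\Gamma)$ with $\Gamma$ a finite set of rationals and a rational register initially $1$; $\delta:Q\times(\Sigma\cup\{\cent,\$\})\times\{=,\neq\}\to Q\times\{\downarrow,\rightarrow\}\times\Gamma$; reading $\sigma$ in state $q$ with $\omega$ ''$=$'' iff the register equals $1$, if $\delta(q,\sigma,\omega)=(q',d,\gamma)$ it goes to $q'$, keeps the head in place ($\downarrow$) or moves it one cell right ($\rightarrow$), and multiplies the register by $\gamma$. The tape holds $\cent w\$$ and the input is accepted iff the machine enters an accept state with register value $1$ after scanning $\$$. *)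

From mathcomp Require Import all_boot all_order all_algebra.
Set Implicit Arguments. Unset Strict Implicit. Unset Printing Implicit Defensive.
Import GRing.Theory Num.Theory.
Local Open Scope ring_scope.

Inductive tsym (S : Type) : Type := Cent | Dollar | Sym of S.
Arguments Cent {S}. Arguments Dollar {S}.

Definition tape (S : Type) (w : seq S) : seq (tsym S) :=
  Cent :: rcons (map (@Sym S) w) Dollar.

Record rtDVA1 (S : Type) := {
  dva_Q : finType;
  dva_delta : dva_Q -> tsym S -> bool -> dva_Q * rat;
     (* the bool argument is omega: true iff current value equals 1 *)
  dva_q0 : dva_Q;
  dva_acc : pred dva_Q;
  dva_v : rat }.

Arguments dva_delta {S} r _ _ _.
Arguments dva_acc {S} r _.
Definition dva_step S (M : rtDVA1 S) (c : dva_Q M * rat) (a : tsym S)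
  : dva_Q M * rat :=
  let: (q, x) := c in
  let: (q', m) := dva_delta M q a (x == 1) in (q', x * m).

Definition dva_accepts S (M : rtDVA1 S) (w : seq S) : bool :=
  let: (q, x) := foldl (@dva_step S M) (dva_q0 M, dva_v M) (tape w) in
  (q \in dva_acc M) && (x == 1).

Definition rtDVA1_language (S : finType) (L : seq S -> Prop) : Prop :=
  exists M : rtDVA1 S, forall w, L w <-> dva_accepts M w.

(* head move: false = stay (down arrow), true = move right *)
Record DFAM1 (S : Type) := {
  fam_Q : finType;
  fam_Gamma : seq rat;
  fam_delta : fam_Q -> tsym S -> bool -> fam_Q * bool * rat;
  fam_delta_Gamma : forall q a b, (fam_delta q a b).2 \in fam_Gamma;
  fam_q0 : fam_Q;
  fam_acc : pred fam_Q }.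

(* configuration: state, head position on the tape (0 = cent), register *)
Arguments fam_delta {S} d _ _ _.
Arguments fam_acc {S} d _.
Definition fam_step S (M : DFAM1 S) (w : seq S) (c : fam_Q M * nat * rat)
  : fam_Q M * nat * rat :=
  let: (q, i, x) := c in
  if (i < size (tape w))%N then
    let: (q', d, g) := fam_delta M q (nth Dollar (tape w) i) (x == 1) in
    (q', (if d then i.+1 else i), x * g)
  else c. (* head has moved past $ : the machine has halted *)

(* accepted iff at some point the head has moved off $ (i.e. $ has been
   scanned) and the machine is in an accept state with register value 1 *)
Definition fam_accepts S (M : DFAM1 S) (w : seq S) : Prop :=
  exists n : nat,
    let: (q, i, x) := iter n (@fam_step S M w) (fam_q0 M, 0%N, 1) in
    [&& (i == size (tape w))%N, q \in fam_acc M & x == 1].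

Definition DFAM1_language (S : finType) (L : seq S -> Prop) : Prop :=
  exists M : DFAM1 S, forall w, L w <-> fam_accepts M w.

From HB Require Import structures.
From mathcomp Require Import all_boot all_order all_algebra.
Set Implicit Arguments. Unset Strict Implicit. Unset Printing Implicit Defensive.
Import GRing.Theory Num.Theory.
Local Open Scope ring_scope.

(* A real-time DVA(1) is simulated by a 1DFAM that spends one extra step on
   the left endmarker to load the initial value v into its register.
   The inclusion is strict because of the language of prefixes of Dyck words
   (letter true opens, false closes).  A 1DFAM keeps 2^height in its register
   and, at the right endmarker, halves it without moving until it reaches 1.
   A real-time DVA(1) gets a single step on the right endmarker, so every
   configuration from which it accepts on reading it is determined by its
   state and by whether its value is 1.  All the words true^n are accepted,
   hence two of them, true^n and true^n' with n < n', lead to the same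
   configuration, and the machine cannot separate true^n false^n' (rejected)
   from true^n' false^n' (accepted). *)

Section TapeSymbols.
Variable S : Type.

Definition tsym_code (a : tsym S) : option (option S) :=
  match a with Cent => None | Dollar => Some None | Sym s => Some (Some s) end.

Definition tsym_decode (o : option (option S)) : tsym S :=
  match o with None => Cent | Some None => Dollar | Some (Some s) => Sym s end.

Lemma tsym_codeK : cancel tsym_code tsym_decode. Proof. by case. Qed.

Lemma size_tape (w : seq S) : size (tape w) = (size w).+2.
Proof. by rewrite /tape /= size_rcons size_map. Qed.

Lemma nth_tape_Sym (w : seq S) x j : (j < size w)%N ->
  nth Dollar (tape w) j.+1 = Sym (nth x w j).
Proof. by move=> lt_j_w; rewrite /= nth_rcons size_map lt_j_w (nth_map x). Qed.

Lemma nth_tape_Dollar (w : seq S) : nth Dollar (tape w) (size w).+1 = Dollar.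
Proof. by rewrite /= nth_rcons size_map ltnn eqxx. Qed.

End TapeSymbols.

HB.instance Definition _ (S : finType) :=
  Finite.copy (tsym S) (can_type (@tsym_codeK S)).

Section DFAMRuns.
Variables (S : Type) (M : DFAM1 S) (w : seq S).

Definition fam_run (n : nat) : fam_Q M * nat * rat :=
  iter n (@fam_step S M w) (fam_q0 M, 0%N, 1).

Definition fam_final (c : fam_Q M * nat * rat) : Prop :=
  let: (q, i, x) := c in [&& i == size (tape w), q \in fam_acc M & x == 1].

Lemma fam_step_halted q x :
  @fam_step S M w (q, size (tape w), x) = (q, size (tape w), x).
Proof. by rewrite /fam_step ltnn. Qed.

Lemma iter_fam_step_halted k q x :
  iter k (@fam_step S M w) (q, size (tape w), x) = (q, size (tape w), x).
Proof. by elim: k => //= k ->; rewrite fam_step_halted. Qed.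

Lemma fam_accepts_halting n :
  (fam_run n).1.2 = size (tape w) ->
  (forall m, (m < n)%N -> (fam_run m).1.2 != size (tape w)) ->
  fam_accepts M w <-> fam_final (fam_run n).
Proof.
move=> halt_n running; split=> [[m accept_m]|final_n]; last by exists n.
have {accept_m} : fam_final (fam_run m) := accept_m.
have [lt_mn|le_nm] := ltnP m n.
  by case: (fam_run m) (running m lt_mn) => [[q i] x] /= /negbTE ->.
rewrite /fam_run -(subnK le_nm) iterD -/(fam_run n).
by case: (fam_run n) halt_n => [[q i] x] /= ->; rewrite iter_fam_step_halted.
Qed.

End DFAMRuns.

Section RealTimeSimulation.
Variables (S : finType) (M : rtDVA1 S).

Definition dva_run (s : seq (tsym S)) : dva_Q M * rat :=
  foldl (@dva_step S M) (dva_q0 M, dva_v M) s.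

(* The fresh initial state [None] multiplies the register, initially 1, by v
   without moving off the left endmarker. *)
Definition sim_delta (o : option (dva_Q M)) (a : tsym S) (b : bool)
    : option (dva_Q M) * bool * rat :=
  if o is Some q then let: (q', m) := dva_delta M q a b in (Some q', true, m)
  else (Some (dva_q0 M), false, dva_v M).

Definition dva_multipliers : seq rat :=
  dva_v M :: [seq (dva_delta M t.1.1 t.1.2 t.2).2 | t : dva_Q M * tsym S * bool].

Lemma sim_delta_multiplier o a b : (sim_delta o a b).2 \in dva_multipliers.
Proof.
rewrite inE; case: o => [q|] /=; last by rewrite eqxx.
case E: (dva_delta M q a b) => [q' m] /=; apply/orP; right.
apply/mapP; exists (q, a, b); first exact: mem_enum.
by rewrite E.
Qed.

Definition sim_acc : pred (option (dva_Q M)) :=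
  fun o => if o is Some q then dva_acc M q else false.

Definition dva_simulator : DFAM1 S :=
  @Build_DFAM1 S _ dva_multipliers sim_delta sim_delta_multiplier None sim_acc.

Lemma dva_simulator_run w j : (j <= size (tape w))%N ->
  fam_run dva_simulator w j.+1 =
  (Some (dva_run (take j (tape w))).1, j, (dva_run (take j (tape w))).2).
Proof.
elim: j => [|j IHj] lt_j_tape; first by rewrite /fam_run /= mul1r.
rewrite /fam_run iterS -/(fam_run _ _ _) (IHj (ltnW lt_j_tape)).
rewrite (take_nth Dollar lt_j_tape) /dva_run foldl_rcons -/(dva_run _).
rewrite /fam_step lt_j_tape; case: (dva_run _) => q x /=.
by rewrite /dva_step; case: (dva_delta M q _ _).
Qed.

Lemma dva_simulatorP w : fam_accepts dva_simulator w <-> dva_accepts M w.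
Proof.
have run_end := dva_simulator_run (leqnn (size (tape w))).
rewrite take_size in run_end.
have halt_end :
    (fam_run dva_simulator w (size (tape w)).+1).1.2 = size (tape w).
  by rewrite run_end.
have running m : (m < (size (tape w)).+1)%N ->
    (fam_run dva_simulator w m).1.2 != size (tape w).
  case: m => [|j]; first by rewrite size_tape.
  rewrite ltnS => lt_j_tape.
  by rewrite (dva_simulator_run (ltnW lt_j_tape)) /= neq_ltn lt_j_tape.
apply: iff_trans (fam_accepts_halting halt_end running) _.
rewrite run_end /fam_final /dva_accepts -/(dva_run _).
by case: (dva_run _) => q x /=; rewrite eqxx.
Qed.

End RealTimeSimulation.

Lemma rtDVA1_language_DFAM1 (S : finType) (L : seq S -> Prop) :
  rtDVA1_language L -> DFAM1_language L.
Proof.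
case=> M ML; exists (dva_simulator M) => w.
exact: iff_trans (ML w) (iff_sym (dva_simulatorP M w)).
Qed.

Section DyckPrefixes.

(* [None] records that the height has gone below zero. *)
Definition height_step (h : option nat) (b : bool) : option nat :=
  if h is Some k then if b then Some k.+1 else if k is k'.+1 then Some k' else None
  else None.

Definition height (w : seq bool) : option nat := foldl height_step (Some 0%N) w.

Definition dyck_prefix (w : seq bool) : bool := isSome (height w).

Lemma foldl_height_step_None s : foldl height_step None s = None.
Proof. by elim: s. Qed.

Lemma height_rcons w b : height (rcons w b) = height_step (height w) b.
Proof. exact: foldl_rcons. Qed.

Lemma dyck_prefix_take j w : dyck_prefix w -> dyck_prefix (take j w).
Proof.
rewrite /dyck_prefix /height -{1}(cat_take_drop j w) foldl_cat.
by case: (foldl _ _ (take j w)); rewrite ?foldl_height_step_None.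
Qed.

Lemma foldl_height_step_nseq_true n k :
  foldl height_step (Some k) (nseq n true) = Some (k + n)%N.
Proof. by elim: n k => [|n IHn] k /=; rewrite ?addn0 // IHn addnS. Qed.

Lemma foldl_height_step_nseq_false m k :
  foldl height_step (Some k) (nseq m false) =
  if (m <= k)%N then Some (k - m)%N else None.
Proof. by elim: m k => [|m IHm] [|k] //=; rewrite foldl_height_step_None. Qed.

Lemma dyck_prefix_nseq n m : dyck_prefix (nseq n true ++ nseq m false) = (m <= n)%N.
Proof.
rewrite /dyck_prefix /height foldl_cat foldl_height_step_nseq_true.
by rewrite foldl_height_step_nseq_false; case: ifP.
Qed.

End DyckPrefixes.

Lemma exp2_eq1 k : ((2 : rat) ^+ k == 1) = (k == 0%N).
Proof. by rewrite pexprn_eq1 // orbF. Qed.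

Lemma exp2S_halve k : (2 : rat) ^+ k.+1 * 2^-1 = 2 ^+ k.
Proof. by rewrite exprSr mulfK. Qed.

Section DyckDFAM.

Local Notation Counting := (Some true).
Local Notation Rejecting := (Some false).
Local Notation Accepting := None.

Definition dyck_delta (q : option bool) (a : tsym bool) (one : bool)
    : option bool * bool * rat :=
  match q, a with
  | Counting, Sym true => (Counting, true, 2)
  | Counting, Sym false =>
      if one then (Rejecting, true, 1) else (Counting, true, 2^-1)
  | Counting, Dollar =>
      if one then (Accepting, true, 1) else (Counting, false, 2^-1)
  | _, _ => (q, true, 1)
  end.

Lemma dyck_delta_multiplier q a one : (dyck_delta q a one).2 \in [:: 1; 2; 2^-1].
Proof.
by case: q => [[]|]; case: a => [||[]]; case: one; rewrite /= !inE eqxx ?orbT.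
Qed.

Definition dyck_DFAM : DFAM1 bool :=
  @Build_DFAM1 bool _ _ dyck_delta dyck_delta_multiplier Counting
    (fun q => q == Accepting).

(* The register falls below 2^height only while draining on the right
   endmarker; cell i of the tape holds letter i - 1. *)
Definition dyck_inv (w : seq bool) (c : option bool * nat * rat) : Prop :=
  let: (q, i, x) := c in
  match q with
  | Counting => exists h k, [/\ height (take i.-1 w) = Some h, (k <= h)%N,
                                x = 2 ^+ k & (i <= (size w).+1)%N]
  | Rejecting => True
  | Accepting => dyck_prefix w
  end.

Lemma dyck_inv_step w c : dyck_inv w c -> dyck_inv w (fam_step (M := dyck_DFAM) w c).
Proof.
case: c => [[q i] x]; rewrite /fam_step size_tape.
case: ifP => // lt_i_tape; case: q => [[]|] //=.
case=> h [k [height_i le_kh ->{x} le_i_w]].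
case: i lt_i_tape height_i le_i_w => [|j] lt_i_tape height_j le_i_w.
  by exists h, k; rewrite mulr1.
rewrite /= in height_j.
have [lt_j_w | lt_w_j | eq_j_w] := ltngtP j (size w).
- rewrite (nth_tape_Sym false lt_j_w) /=.
  have height_j1 : height (take j.+1 w) = height_step (Some h) (nth false w j).
    by rewrite (take_nth false lt_j_w) height_rcons height_j.
  case: (nth false w j) height_j1 => /= height_j1.
    by exists h.+1, k.+1; rewrite exprSr.
  rewrite exp2_eq1; case: k le_kh => [|k] le_kh //=.
  case: h height_j height_j1 le_kh => [|h] // _ height_j1 le_kh.
  by exists h, k; rewrite exp2S_halve.
- by move: le_i_w; rewrite ltnS leqNgt lt_w_j.
- subst j; rewrite nth_tape_Dollar /= exp2_eq1.
  case: k le_kh => [|k] le_kh /=.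
    by rewrite /dyck_prefix -(take_size w) height_j.
  by exists h, k; rewrite exp2S_halve ltnW.
Qed.

Lemma dyck_DFAM_sound w : fam_accepts dyck_DFAM w -> dyck_prefix w.
Proof.
case=> n; rewrite -/(fam_run _ _ n).
have : dyck_inv w (fam_run dyck_DFAM w n).
  elim: n => [|n IHn]; last by rewrite /fam_run iterS; apply: dyck_inv_step.
  by exists 0%N, 0%N; rewrite take0.
by case: (fam_run _ _ _) => [[[[]|] i] x] inv_n /and3P [].
Qed.

Lemma dyck_DFAM_run w j : dyck_prefix w -> (j <= size w)%N ->
  exists h, height (take j w) = Some h /\
            fam_run dyck_DFAM w j.+1 = (Counting, j.+1, 2 ^+ h).
Proof.
move=> dyck_w; elim: j => [|j IHj] lt_j_w; first by exists 0%N; rewrite take0.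
have [h [height_j run_j]] := IHj (ltnW lt_j_w).
have lt_j1_tape : (j.+1 < size (tape w))%N by rewrite size_tape ltnS ltnW.
rewrite /fam_run iterS -/(fam_run _ _ _) run_j /fam_step lt_j1_tape.
rewrite (nth_tape_Sym false lt_j_w).
have := dyck_prefix_take j.+1 dyck_w.
rewrite /dyck_prefix (take_nth false lt_j_w) height_rcons height_j.
case: (nth false w j) => /=; first by exists h.+1; rewrite exprSr.
case: h height_j {run_j} => [|h] height_j //= _.
by exists h; rewrite exp2_eq1 /= exp2S_halve.
Qed.

Lemma dyck_DFAM_drain w k r :
  iter k (fam_step (M := dyck_DFAM) w) (Counting, (size w).+1, 2 ^+ (r + k)) =
  (Counting, (size w).+1, 2 ^+ r).
Proof.
elim: k r => [|k IHk] r; first by rewrite addn0.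
rewrite iterS addnS -addSn IHk /fam_step size_tape ltnSn nth_tape_Dollar /=.
by rewrite exp2_eq1 /= exp2S_halve.
Qed.

Lemma dyck_DFAM_complete w : dyck_prefix w -> fam_accepts dyck_DFAM w.
Proof.
move=> dyck_w; have [h [_ run_w]] := dyck_DFAM_run dyck_w (leqnn (size w)).
exists (h + (size w).+1).+1.
rewrite iterS iterD -/(fam_run _ _ _) run_w -[h]add0n dyck_DFAM_drain.
by rewrite /fam_step size_tape ltnSn nth_tape_Dollar /= eqxx.
Qed.

End DyckDFAM.

Lemma dyck_prefix_DFAM1 : DFAM1_language (fun w => dyck_prefix w).
Proof.
exists dyck_DFAM => w.
by split; [exact: dyck_DFAM_complete | exact: dyck_DFAM_sound].
Qed.

Lemma nat_fun_not_injective (T : finType) (f : nat -> T) :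
  exists n n', (n < n')%N /\ f n = f n'.
Proof.
have /injectivePn [i [j neq_ij eq_f]] : ~~ injectiveb (fun i : 'I_#|T|.+1 => f i).
  by apply/injectiveP => /leq_card; rewrite card_ord ltnn.
have [lt_ij | lt_ji | eq_ij] := ltngtP i j.
- by exists i, j.
- by exists j, i.
- by move: neq_ij; rewrite (val_inj eq_ij) eqxx.
Qed.

Section NoRealTimeDVA.
Variables (S : Type) (M : rtDVA1 S).

Definition dva_conf (u : seq S) : dva_Q M * rat :=
  foldl (@dva_step S M) (dva_q0 M, dva_v M) (Cent :: map (@Sym S) u).

Definition dva_accepts_from (c : dva_Q M * rat) (v : seq S) : bool :=
  let: (q, x) := foldl (@dva_step S M) c (rcons (map (@Sym S) v) Dollar) in
  (q \in dva_acc M) && (x == 1).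

Lemma dva_accepts_cat u v : dva_accepts M (u ++ v) = dva_accepts_from (dva_conf u) v.
Proof. by rewrite /dva_accepts /tape map_cat rcons_cat /= foldl_cat. Qed.

(* If the value differs from 1, reading the right endmarker multiplies it by a
   factor depending only on the state, so an accepting value must be its inverse. *)
Definition dollar_accepting_conf (t : dva_Q M * bool) : dva_Q M * rat :=
  (t.1, if t.2 then 1 else ((dva_delta M t.1 Dollar false).2)^-1).

Lemma dollar_accepting_confE c : dva_accepts_from c [::] ->
  c = dollar_accepting_conf (c.1, c.2 == 1).
Proof.
case: c => p x; rewrite /dva_accepts_from /dollar_accepting_conf /= /dva_step.
have [->|_] := eqP; first by [].
case: (dva_delta M p Dollar false) => q' m /= /andP [_ /eqP xm1].
have m_neq0 : m != 0 by apply: contra_eq_neq xm1 => ->; rewrite mulr0.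
by rewrite -[x](mulfK m_neq0) xm1 mul1r.
Qed.

End NoRealTimeDVA.

Lemma dyck_prefix_not_rtDVA1 : ~ rtDVA1_language (fun w => dyck_prefix w).
Proof.
case=> M ML.
pose t n := ((dva_conf M (nseq n true)).1, (dva_conf M (nseq n true)).2 == 1).
have conf_t n : dva_conf M (nseq n true) = dollar_accepting_conf (t n).
  apply: dollar_accepting_confE; rewrite -dva_accepts_cat cats0; apply/ML.
  by rewrite -[nseq n true]cats0 -[[::]]/(nseq 0 false) dyck_prefix_nseq.
have [n [n' [lt_nn' eq_t]]] := nat_fun_not_injective t.
have : dva_accepts M (nseq n' true ++ nseq n' false).
  by apply/ML; rewrite dyck_prefix_nseq.
rewrite dva_accepts_cat conf_t -eq_t -conf_t -dva_accepts_cat => /ML.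
by rewrite dyck_prefix_nseq leqNgt lt_nn'.
Qed.

Theorem theorem7 :
  (forall (S : finType) (L : seq S -> Prop),
      rtDVA1_language L -> DFAM1_language L) /\
  (exists (S : finType) (L : seq S -> Prop),
      DFAM1_language L /\ ~ rtDVA1_language L).
Proof.
split; first exact: rtDVA1_language_DFAM1.
exists bool, (fun w => dyck_prefix w).
by split; [exact: dyck_prefix_DFAM1 | exact: dyck_prefix_not_rtDVA1].
Qed.
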